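(* Let $\mathcal D=\{x\in\mathbb R^d:Bx\le c\}$ be a nonempty bounded polytope, $A\in\mathbb R^{m\times d}$, $b\in\mathbb R^d$, and $f(x):=g(Ax)+\langle b,x\rangle$, where $g$ is continuously differentiable on an open set containing $A\mathcal D$ and $\mu_g$-strongly convex on $A\mathcal D$ (Euclidean norm) with $\mu_g>0$. Let $\mathcal X^*:=\arg\min_{x\in\mathcal D}f(x)$, $G:=\max_{x\in\mathcal D}\|\nabla g(Ax)\|$, $M:=\mathrm{diam}(\mathcal D)$, $M_A:=\mathrm{diam}(A\mathcal D)$, and let $\theta>0$ be a Hoffman constant for the matrix $\begin{pmatrix}A\\ b^\top\\ B\end{pmatrix}$ as defined in the context. Then for every $x\in\mathcal D$ and $x^*\in\mathcal X^*$, $$f(x^* )-f(x)-2\langle\nabla f(x),x^*-x\rangle\ \ge\ 2\tilde\mu\,d(x,\mathcal X^* )^2,\qquad \tilde\mu:=\frac{1}{2\theta^2\big(\|b\|M+3GM_A+\frac{2}{\mu_g}(G^2+1)\big)}.$$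
   Context: Euclidean norms; $d(x,\mathcal X^* )=\min_{y\in\mathcal X^*}\|x-y\|$; diameters are Euclidean. Hoffman constant: $\theta>0$ is such that for every $t\in\mathbb R^m$ and $s\in\mathbb R$ for which $P_{t,s}:=\{y\in\mathbb R^d:Ay=t,\ \langle b,y\rangle=s,\ By\le c\}$ is nonempty, and every $x$ with $Bx\le c$, one has $d(x,P_{t,s})\le\theta\,\|(Ax-t,\ \langle b,x\rangle-s)\|$. *)

From mathcomp Require Import all_boot.
From Stdlib Require Import Reals.
Set Implicit Arguments.
Unset Strict Implicit.
Unset Printing Implicit Defensive.
Local Open Scope R_scope.

Definition vec (n : nat) := 'I_n -> R.
Definition mat (m n : nat) := 'I_m -> 'I_n -> R.

Definition dot (n : nat) (x y : vec n) : R := \big[Rplus/0%R]_(i < n) (x i * y i).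
Definition vnorm (n : nat) (x : vec n) : R := sqrt (dot x x).
Definition vadd (n : nat) (x y : vec n) : vec n := fun i => x i + y i.
Definition vsub (n : nat) (x y : vec n) : vec n := fun i => x i - y i.
Definition vscale (n : nat) (a : R) (x : vec n) : vec n := fun i => a * x i.
Definition mulmv (m n : nat) (A : mat m n) (x : vec n) : vec m :=
  fun i => \big[Rplus/0%R]_(j < n) (A i j * x j).
Definition vle (n : nat) (x y : vec n) : Prop := forall i, x i <= y i.

Definition polyhedron (k d : nat) (B : mat k d) (c : vec k) : vec d -> Prop :=
  fun x => vle (mulmv B x) c.

Definition is_inf (E : R -> Prop) (r : R) : Prop :=
  (forall v, E v -> r <= v) /\ (forall r', (forall v, E v -> r' <= v) -> r' <= r).

Definition is_dist (n : nat) (S : vec n -> Prop) (x : vec n) (r : R) : Prop :=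
  is_inf (fun v => exists y, S y /\ v = vnorm (vsub x y)) r.

Definition is_diam (n : nat) (S : vec n -> Prop) (r : R) : Prop :=
  is_lub (fun v => exists x y, S x /\ S y /\ v = vnorm (vsub x y)) r.

Definition open_vset (n : nat) (U : vec n -> Prop) : Prop :=
  forall y, U y -> exists r, 0 < r /\ forall z, vnorm (vsub z y) < r -> U z.

Definition is_gradient (n : nat) (h : vec n -> R) (v : vec n) (y : vec n) : Prop :=
  forall eps, 0 < eps -> exists delta, 0 < delta /\
    forall z, vnorm (vsub z y) < delta ->
      Rabs (h z - h y - dot v (vsub z y)) <= eps * vnorm (vsub z y).

Definition C1_on (n : nat) (U : vec n -> Prop) (h : vec n -> R)
    (gradh : vec n -> vec n) : Prop :=
  (forall y, U y -> is_gradient h (gradh y) y) /\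
  (forall y, U y -> forall eps, 0 < eps -> exists delta, 0 < delta /\
     forall z, U z -> vnorm (vsub z y) < delta ->
       vnorm (vsub (gradh z) (gradh y)) < eps).

Definition strongly_convex_on (n : nat) (mu : R) (S : vec n -> Prop)
    (h : vec n -> R) : Prop :=
  forall y z lam, S y -> S z -> 0 <= lam <= 1 ->
    h (vadd (vscale lam y) (vscale (1 - lam) z))
      <= lam * h y + (1 - lam) * h z
         - mu / 2 * lam * (1 - lam) * (vnorm (vsub y z)) ^ 2.

Definition image_set (m d : nat) (A : mat m d) (D : vec d -> Prop) : vec m -> Prop :=
  fun y => exists x, D x /\ y = mulmv A x.

Definition P_ts (m d k : nat) (A : mat m d) (b : vec d) (B : mat k d) (c : vec k)
    (t : vec m) (s : R) : vec d -> Prop :=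
  fun y => mulmv A y = t /\ dot b y = s /\ vle (mulmv B y) c.

Definition hoffman_constant (m d k : nat) (A : mat m d) (b : vec d) (B : mat k d)
    (c : vec k) (theta : R) : Prop :=
  0 < theta /\
  forall (t : vec m) (s : R), (exists y, P_ts A b B c t s y) ->
  forall x, vle (mulmv B x) c ->
  forall r, is_dist (P_ts A b B c t s) x r ->
    r <= theta * sqrt ((vnorm (vsub (mulmv A x) t)) ^ 2 + (dot b x - s) ^ 2).

(* The gradient inequality of f at x, which inherits the modulus of g along A, gives
     f(xs) - f(x) - 2<grad f(x), xs - x> >= (f(x) - f(xs)) + mu_g |Ax - Axs|^2.
   Strong convexity of g forces every minimiser y to satisfy Ay = Axs and <b,y> = <b,xs>,
   so Xstar is the polyhedral slice P_{Axs, <b,xs>} and the Hoffman bound reads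
     d(x, Xstar)^2 <= theta^2 (|Ax - Axs|^2 + <b, x - xs>^2).
   Finally <b, x - xs> = (f(x) - f(xs)) - (g(Ax) - g(Axs)), where |g(Ax) - g(Axs)| <= G |Ax - Axs|
   and |<b, x - xs>| <= |b| M, which bounds the right-hand side by a multiple of the first display. *)

From HB Require Import structures.
From mathcomp Require Import all_boot.
From Stdlib Require Import Reals Lra Psatz FunctionalExtensionality.
Local Open Scope R_scope.
Set Implicit Arguments.
Unset Strict Implicit.

HB.instance Definition _ :=
  Monoid.isComLaw.Build R 0 Rplus (fun a b c => esym (Rplus_assoc a b c)) Rplus_comm Rplus_0_l.

Lemma sumR_ge0 n (P : pred 'I_n) (F : 'I_n -> R) :
  (forall i, 0 <= F i) -> 0 <= \big[Rplus/0]_(i < n | P i) F i.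
Proof. by move=> F_ge0; apply: big_ind; [lra | move=> x y; lra | move=> i _; apply: F_ge0]. Qed.

Lemma sumR_ge_term n (F : 'I_n -> R) i :
  (forall j, 0 <= F j) -> F i <= \big[Rplus/0]_(j < n) F j.
Proof.
move=> F_ge0; rewrite (bigD1 i) //=.
have /= := sumR_ge0 (fun j => j != i) F_ge0.
by rewrite -{1}[F i]Rplus_0_r; apply: Rplus_le_compat_l.
Qed.

Lemma dot_ge0 n (x : vec n) : 0 <= dot x x.
Proof. by apply: sumR_ge0 => i; nra. Qed.

Lemma dot_linear_r n (u x y : vec n) a c :
  dot u (fun i => a * x i + c * y i) = a * dot u x + c * dot u y.
Proof.
by apply: (big_rec3 (fun s sx sy => s = a * sx + c * sy)) => [|i s sx sy _ ->]; ring.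
Qed.

Lemma dot_scale_r n (u x : vec n) a : dot u (fun i => a * x i) = a * dot u x.
Proof.
by apply: (big_rec2 (fun s sx => s = a * sx)) => [|i s sx _ ->]; ring.
Qed.

Lemma dot_sub_r n (u x y : vec n) : dot u (vsub x y) = dot u x - dot u y.
Proof.
by apply: (big_rec3 (fun s sx sy => s = sx - sy)) => [|i s sx sy _ ->]; rewrite /vsub; ring.
Qed.

Lemma dot_comb_r n (u y z : vec n) lam :
  dot u (vadd (vscale lam y) (vscale (1 - lam) z)) = lam * dot u y + (1 - lam) * dot u z.
Proof. exact: dot_linear_r. Qed.

Lemma dot_sym n (x y : vec n) : dot x y = dot y x.
Proof. by apply: eq_bigr => i _; ring. Qed.

Lemma dot_linear_l n (x y u : vec n) a c :
  dot (fun i => a * x i + c * y i) u = a * dot x u + c * dot y u.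
Proof. by rewrite dot_sym dot_linear_r !(dot_sym u). Qed.

Lemma dot_self_eq0 n (x : vec n) : dot x x = 0 -> forall i, x i = 0.
Proof.
move=> xx0 i; have := @sumR_ge_term n (fun j => x j * x j) i (fun j => ltac:(nra)).
rewrite -/(dot x x) xx0; nra.
Qed.

Lemma dot_sq_le n (u v : vec n) : dot u v ^ 2 <= dot u u * dot v v.
Proof.
have [vv_gt0 | vv0] := Rle_lt_or_eq_dec _ _ (dot_ge0 v).
  have := dot_ge0 (fun i => dot v v * u i + (- dot u v) * v i).
  rewrite dot_linear_l !dot_linear_r (dot_sym v u); nra.
have -> : dot u v = 0.
  rewrite /dot big1 // => i _; rewrite (dot_self_eq0 (esym vv0)); ring.
rewrite -vv0; nra.
Qed.

Lemma vnorm_ge0 n (x : vec n) : 0 <= vnorm x.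
Proof. exact: sqrt_pos. Qed.

Lemma Rabs_dot_le n (u v : vec n) : Rabs (dot u v) <= vnorm u * vnorm v.
Proof.
rewrite /vnorm -sqrt_mult_alt; last exact: dot_ge0.
rewrite -(sqrt_Rsqr_abs (dot u v)).
by apply: sqrt_le_1_alt; rewrite /Rsqr; have := dot_sq_le u v; lra.
Qed.

Lemma vnorm_sub_sym n (x y : vec n) : vnorm (vsub x y) = vnorm (vsub y x).
Proof. by rewrite /vnorm; congr sqrt; apply: eq_bigr => i _; rewrite /vsub; ring. Qed.

Lemma vnorm_scale n (t : R) (x : vec n) : 0 <= t -> vnorm (fun i => t * x i) = t * vnorm x.
Proof.
move=> t_ge0; rewrite /vnorm dot_scale_r dot_sym dot_scale_r -Rmult_assoc.
by rewrite sqrt_mult_alt ?sqrt_square //; nra.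
Qed.

Lemma vnorm_sub_eq0 n (x y : vec n) : vnorm (vsub x y) = 0 -> x = y.
Proof.
move=> /(sqrt_eq_0 _ (dot_ge0 _)) /dot_self_eq0 xy0.
by apply: functional_extensionality => i; have := xy0 i; rewrite /vsub; lra.
Qed.

Lemma vsub_comb_l n (y z : vec n) t :
  vsub (vadd (vscale (1 - t) y) (vscale t z)) y = (fun i => t * vsub z y i).
Proof. by apply: functional_extensionality => i; rewrite /vsub /vadd /vscale; ring. Qed.

Lemma mulmv_comb m n (A : mat m n) (y z : vec n) lam :
  mulmv A (vadd (vscale lam y) (vscale (1 - lam) z)) =
  vadd (vscale lam (mulmv A y)) (vscale (1 - lam) (mulmv A z)).
Proof.
apply: functional_extensionality => i; rewrite /mulmv /vadd /vscale.
by apply: (big_rec3 (fun s sy sz => s = lam * sy + (1 - lam) * sz)) => [|j s sy sz _ ->]; ring.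
Qed.

Lemma polyhedron_convex k n (B : mat k n) (c : vec k) y z lam :
  polyhedron B c y -> polyhedron B c z -> 0 <= lam <= 1 ->
  polyhedron B c (vadd (vscale lam y) (vscale (1 - lam) z)).
Proof.
rewrite /polyhedron /vle mulmv_comb /vadd /vscale => By Bz lam01 i.
by have := By i; have := Bz i; nra.
Qed.

Lemma dist_ge0 n (S : vec n -> Prop) x r : is_dist S x r -> 0 <= r.
Proof. by move=> [_ r_glb]; apply: r_glb => v [y [_ ->]]; apply: vnorm_ge0. Qed.

Lemma is_dist_ext n (S T : vec n -> Prop) x r :
  (forall y, S y <-> T y) -> is_dist S x r -> is_dist T x r.
Proof.
move=> ST [r_lb r_glb]; split.
  by move=> v [y [Ty ->]]; apply: r_lb; exists y; split => //; apply/ST.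
by move=> r' r'_lb; apply: r_glb => v [y [Sy ->]]; apply: r'_lb; exists y; split => //; apply/ST.
Qed.

Lemma is_gradient_along_segment n (h : vec n -> R) (v y z : vec n) e :
  is_gradient h v y -> 0 < e -> exists T, 0 < T /\ forall t, 0 < t <= T ->
    t * dot v (vsub z y) - e * t * vnorm (vsub z y)
      <= h (vadd (vscale (1 - t) y) (vscale t z)) - h y.
Proof.
move=> grad e_gt0; have [del [del_gt0 near_y]] := grad e e_gt0.
set N := vnorm (vsub z y); have N_ge0 : 0 <= N := vnorm_ge0 _.
exists (del / (N + 1)); split => [|t t_range]; first by apply: Rdiv_lt_0_compat; lra.
have step_norm : vnorm (vsub (vadd (vscale (1 - t) y) (vscale t z)) y) = t * N.
  by rewrite vsub_comb_l vnorm_scale //; lra.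
have tN_lt : t * N < del.
  have : t * (N + 1) <= del.
    have -> : del = del / (N + 1) * (N + 1) by field; lra.
    by apply: Rmult_le_compat_r; lra.
  nra.
have := near_y (vadd (vscale (1 - t) y) (vscale t z)) ltac:(rewrite step_norm; lra).
rewrite step_norm vsub_comb_l dot_scale_r -Rabs_Ropp.
by move=> /(Rle_trans _ _ _ (Rle_abs _)); lra.
Qed.

Lemma le0_of_vanishing_slack (Q a c : R) : 0 <= a ->
  (forall e, 0 < e -> exists T, 0 < T /\ forall t, 0 < t <= T -> Q <= e * a + c * t) ->
  Q <= 0.
Proof.
move=> a_ge0 slack; apply: le_epsilon => eta eta_gt0.
have [T [T_gt0 slack_T]] := slack (eta / (2 * (a + 1))) ltac:(apply: Rdiv_lt_0_compat; lra).
have c_ge0 := Rabs_pos c.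
set t := Rmin T (eta / (2 * (Rabs c + 1))).
have t_gt0 : 0 < t by apply: Rmin_glb_lt => //; apply: Rdiv_lt_0_compat; lra.
have := slack_T t (conj t_gt0 (Rmin_l _ _)).
have ea_le : eta / (2 * (a + 1)) * a <= eta / 2.
  have : eta / (2 * (a + 1)) * (a + 1) = eta / 2 by field; lra.
  have : 0 < eta / (2 * (a + 1)) by apply: Rdiv_lt_0_compat; lra.
  nra.
have ct_le : c * t <= eta / 2.
  have : Rabs c * (eta / (2 * (Rabs c + 1))) <= eta / 2.
    have : eta / (2 * (Rabs c + 1)) * (Rabs c + 1) = eta / 2 by field; lra.
    have : 0 < eta / (2 * (Rabs c + 1)) by apply: Rdiv_lt_0_compat; lra.
    nra.
  have := Rmult_le_compat_l _ _ _ c_ge0 (Rmin_r T (eta / (2 * (Rabs c + 1)))).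
  have := Rle_abs c; rewrite -/t; nra.
lra.
Qed.

(* Take lam = 1 - t in the chord inequality, divide by t and let t -> 0. *)
Lemma gradient_ineq_of_chord_gap n (h : vec n -> R) (v y z : vec n) gap :
  is_gradient h v y ->
  (forall lam, 0 <= lam <= 1 -> h (vadd (vscale lam y) (vscale (1 - lam) z))
      <= lam * h y + (1 - lam) * h z - gap * lam * (1 - lam)) ->
  h y + dot v (vsub z y) + gap <= h z.
Proof.
move=> grad chord.
suff : h y + dot v (vsub z y) + gap - h z <= 0 by lra.
apply: (@le0_of_vanishing_slack _ _ gap (vnorm_ge0 (vsub z y))) => e e_gt0.
have [T [T_gt0 segment_T]] := is_gradient_along_segment z grad e_gt0.
exists (Rmin T 1); split => [|t [t_gt0 t_le]]; first by apply: Rmin_glb_lt; lra.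
have := segment_T t (conj t_gt0 (Rle_trans _ _ _ t_le (Rmin_l T 1))).
have t_le1 := Rle_trans _ _ _ t_le (Rmin_r T 1).
have := chord (1 - t) ltac:(lra); rewrite (_ : 1 - (1 - t) = t); last ring.
move=> chord_t segment_t; apply: (Rmult_le_reg_l t) => //; lra.
Qed.

Lemma strongly_convex_gradient_ineq n mu (S : vec n -> Prop) h (v y z : vec n) :
  strongly_convex_on mu S h -> S y -> S z -> is_gradient h v y ->
  h y + dot v (vsub z y) + mu / 2 * vnorm (vsub y z) ^ 2 <= h z.
Proof.
move=> h_sc Sy Sz grad; apply: (gradient_ineq_of_chord_gap grad) => lam lam01.
by have := h_sc y z lam Sy Sz lam01; lra.
Qed.

Lemma strongly_convex_sub_le n mu (S : vec n -> Prop) h (v y z : vec n) L :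
  0 <= mu -> strongly_convex_on mu S h -> S y -> S z -> is_gradient h v y ->
  vnorm v <= L -> h y - h z <= L * vnorm (vsub y z).
Proof.
move=> mu_ge0 h_sc Sy Sz grad v_le.
have := strongly_convex_gradient_ineq h_sc Sy Sz grad.
have : 0 <= mu / 2 * vnorm (vsub y z) ^ 2 by apply: Rmult_le_pos; [lra | apply: pow2_ge_0].
have := Rmult_le_compat_r _ _ _ (vnorm_ge0 (vsub y z)) v_le.
have := Rabs_dot_le v (vsub z y); rewrite -Rabs_Ropp vnorm_sub_sym.
by move=> /(Rle_trans _ _ _ (Rle_abs _)); lra.
Qed.

Lemma strongly_convex_Rabs_sub_le n mu (S : vec n -> Prop) h (grad : vec n -> vec n) y z L :
  0 <= mu -> strongly_convex_on mu S h -> S y -> S z ->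
  is_gradient h (grad y) y -> is_gradient h (grad z) z ->
  vnorm (grad y) <= L -> vnorm (grad z) <= L -> Rabs (h y - h z) <= L * vnorm (vsub y z).
Proof.
move=> mu_ge0 h_sc Sy Sz grad_y grad_z y_le z_le; apply: Rabs_le; split.
  have := strongly_convex_sub_le mu_ge0 h_sc Sz Sy grad_z z_le.
  by rewrite vnorm_sub_sym; lra.
exact: strongly_convex_sub_le mu_ge0 h_sc Sy Sz grad_y y_le.
Qed.

Section CompositeObjective.

Variables (m d : nat) (A : mat m d) (b : vec d) (g : vec m -> R) (mu : R) (D : vec d -> Prop).
Hypothesis g_sc : strongly_convex_on mu (image_set A D) g.

Let f (x : vec d) := g (mulmv A x) + dot b x.

Lemma composite_chord_gap y z lam : D y -> D z -> 0 <= lam <= 1 ->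
  f (vadd (vscale lam y) (vscale (1 - lam) z))
    <= lam * f y + (1 - lam) * f z
       - mu / 2 * vnorm (vsub (mulmv A y) (mulmv A z)) ^ 2 * lam * (1 - lam).
Proof.
move=> Dy Dz lam01; rewrite /f mulmv_comb dot_comb_r.
have := g_sc (ex_intro _ y (conj Dy erefl)) (ex_intro _ z (conj Dz erefl)) lam01.
lra.
Qed.

Lemma composite_gradient_ineq v y z : D y -> D z -> is_gradient f v y ->
  f y + dot v (vsub z y) + mu / 2 * vnorm (vsub (mulmv A y) (mulmv A z)) ^ 2 <= f z.
Proof.
move=> Dy Dz grad; apply: (gradient_ineq_of_chord_gap grad) => lam lam01.
by have := composite_chord_gap Dy Dz lam01; lra.
Qed.

Hypothesis mu_gt0 : 0 < mu.
Hypothesis D_convex : forall y z lam, D y -> D z -> 0 <= lam <= 1 ->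
  D (vadd (vscale lam y) (vscale (1 - lam) z)).

(* Strong convexity of g pins down A x on the solution set, and then f pins down <b, x>. *)
Lemma composite_argmin_iff xs y : D xs -> (forall z, D z -> f xs <= f z) ->
  (D y /\ forall z, D z -> f y <= f z) <->
  (mulmv A y = mulmv A xs /\ dot b y = dot b xs /\ D y).
Proof.
move=> Dxs xs_min; split=> [[Dy y_min] | [Ay [by_ Dy]]]; last first.
  by split=> // z Dz; rewrite /f Ay by_; apply: xs_min.
have f_eq : f y = f xs by have := y_min xs Dxs; have := xs_min y Dy; lra.
have Ay : mulmv A y = mulmv A xs.
  apply: vnorm_sub_eq0.
  have := composite_chord_gap Dy Dxs (lam := 1 / 2) ltac:(lra).
  have := xs_min _ (D_convex Dy Dxs (lam := 1 / 2) ltac:(lra)).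
  have := vnorm_ge0 (vsub (mulmv A y) (mulmv A xs)).
  set N := vnorm _ => N_ge0 mid_ge mid_le.
  have : mu * N ^ 2 <= 0 by lra.
  have : N ^ 2 <= 0 by nra.
  nra.
by split=> //; split=> //; move: f_eq; rewrite /f Ay; lra.
Qed.

End CompositeObjective.

Lemma sq_error_le_growth (gap e q G MA nbM mu : R) :
  0 < mu -> 0 <= G -> 0 <= e <= MA -> 0 <= gap ->
  Rabs q <= nbM -> Rabs (gap - q) <= G * e ->
  e ^ 2 + q ^ 2 <= (nbM + 3 * G * MA + 2 / mu * (G ^ 2 + 1)) * (gap + mu * e ^ 2).
Proof.
move=> mu_gt0 G_ge0 [e_ge0 e_le] gap_ge0 q_le dq_le.
have q_le' : Rabs q <= gap + G * e.
  by move: dq_le; split_Rabs; lra.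
have q_sq : q ^ 2 <= nbM * gap + G * MA * gap + G ^ 2 * e ^ 2.
  have Ge_ge0 : 0 <= G * e by apply: Rmult_le_pos.
  have := Rmult_le_compat_l (gap * G) _ _ (Rmult_le_pos _ _ gap_ge0 G_ge0) e_le.
  rewrite -(pow2_abs q); have := Rabs_pos q; nra.
have -> : (nbM + 3 * G * MA + 2 / mu * (G ^ 2 + 1)) * (gap + mu * e ^ 2)
    = (nbM + 3 * G * MA) * (gap + mu * e ^ 2) + 2 / mu * (G ^ 2 + 1) * gap
      + 2 * (G ^ 2 + 1) * e ^ 2 by field; lra.
have nbM_ge0 : 0 <= nbM by have := Rabs_pos q; lra.
have GMA_ge0 : 0 <= G * MA by apply: Rmult_le_pos; lra.
have : 0 <= 2 / mu * (G ^ 2 + 1) * gap.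
  apply: Rmult_le_pos => //; apply: Rmult_le_pos; last by have := pow2_ge_0 G; lra.
  by apply: Rlt_le; apply: Rdiv_lt_0_compat; lra.
have : 0 <= (nbM + 3 * G * MA) * (mu * e ^ 2).
  by apply: Rmult_le_pos; [lra | apply: Rmult_le_pos; [lra | apply: pow2_ge_0]].
have := pow2_ge_0 e; have := pow2_ge_0 G; nra.
Qed.

Lemma growth_of_hoffman_bound (r theta S K L : R) :
  0 < theta -> 0 < K -> 0 <= r -> r <= theta * sqrt S -> 0 <= S -> S <= K * L ->
  2 * (1 / (2 * theta ^ 2 * K)) * r ^ 2 <= L.
Proof.
move=> theta_gt0 K_gt0 r_ge0 r_le S_ge0 S_le.
have r_sq : r ^ 2 <= theta ^ 2 * S.
  have -> : theta ^ 2 * S = theta * sqrt S * (theta * sqrt S).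
    by rewrite -{1}(sqrt_sqrt S S_ge0); ring.
  by have := Rmult_le_compat _ _ _ _ r_ge0 r_ge0 r_le r_le; lra.
have thetaK_gt0 : 0 < theta ^ 2 * K by apply: Rmult_lt_0_compat => //; apply: pow_lt.
have -> : 2 * (1 / (2 * theta ^ 2 * K)) * r ^ 2 = r ^ 2 / (theta ^ 2 * K) by field; lra.
apply: (Rmult_le_reg_r _ _ _ thetaK_gt0).
rewrite /Rdiv Rmult_assoc Rinv_l; last lra.
by have := Rmult_le_compat_l _ _ _ (pow2_ge_0 theta) S_le; lra.
Qed.

Lemma quadratic_growth_arith (gap e q G MA nbM mu theta r : R) :
  0 < mu -> 0 < theta -> 0 <= G -> 0 <= e <= MA -> 0 <= gap ->
  Rabs q <= nbM -> Rabs (gap - q) <= G * e ->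
  0 <= r -> r <= theta * sqrt (e ^ 2 + q ^ 2) ->
  2 * (1 / (2 * theta ^ 2 * (nbM + 3 * G * MA + 2 / mu * (G ^ 2 + 1)))) * r ^ 2
    <= gap + mu * e ^ 2.
Proof.
move=> mu_gt0 theta_gt0 G_ge0 e_range gap_ge0 q_le dq_le r_ge0 r_le.
apply: (growth_of_hoffman_bound theta_gt0 _ r_ge0 r_le).
- have : 0 < 2 / mu * (G ^ 2 + 1).
    by apply: Rmult_lt_0_compat; [apply: Rdiv_lt_0_compat | have := pow2_ge_0 G]; lra.
  have := Rabs_pos q; have : 0 <= G * MA by apply: Rmult_le_pos; lra.
  lra.
- by have := pow2_ge_0 e; have := pow2_ge_0 q; lra.
- exact: sq_error_le_growth.
Qed.

Unset Implicit Arguments.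
Set Strict Implicit.

Theorem mainTheorem10 (m d k : nat) (A : mat m d) (b : vec d) (B : mat k d) (c : vec k)
  (g : vec m -> R) (gradg : vec m -> vec m) (U : vec m -> Prop) (mu_g : R)
  (gradf : vec d -> vec d) (G M M_A theta : R) :
  let D := polyhedron B c in
  let f := fun x : vec d => g (mulmv A x) + dot b x in
  let Xstar := fun x : vec d => D x /\ forall y, D y -> f x <= f y in
  (exists x0, D x0) ->
  (exists R0, forall x, D x -> vnorm x <= R0) ->
  open_vset U ->
  (forall x, D x -> U (mulmv A x)) ->
  C1_on U g gradg ->
  0 < mu_g ->
  strongly_convex_on mu_g (image_set A D) g ->
  (forall x, D x -> is_gradient f (gradf x) x) ->
  is_lub (fun v => exists x, D x /\ v = vnorm (gradg (mulmv A x))) G ->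
  is_diam D M ->
  is_diam (image_set A D) M_A ->
  hoffman_constant A b B c theta ->
  forall x xs, D x -> Xstar xs ->
  forall r, is_dist Xstar x r ->
    let mutilde := 1 / (2 * theta ^ 2 *
          (vnorm b * M + 3 * G * M_A + 2 / mu_g * (G ^ 2 + 1))) in
    f xs - f x - 2 * dot (gradf x) (vsub xs x) >= 2 * mutilde * r ^ 2.
Proof.
move=> D f Xstar _ _ _ AD_U [gradg_ok _] mu_gt0 g_sc gradf_ok G_lub M_diam MA_diam
  [theta_gt0 hoffman] x xs Dx [Dxs xs_min] r r_dist mutilde.
have AD y : D y -> image_set A D (mulmv A y) by exists y.
have gradg_le y : D y -> vnorm (gradg (mulmv A y)) <= G.
  by move=> Dy; apply: (proj1 G_lub); exists y.
have G_ge0 : 0 <= G by have := gradg_le x Dx; have := vnorm_ge0 (gradg (mulmv A x)); lra.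
have q_le : Rabs (dot b x - dot b xs) <= vnorm b * M.
  rewrite -dot_sub_r; apply: Rle_trans (Rabs_dot_le _ _) _.
  by apply: Rmult_le_compat_l (vnorm_ge0 b) _; apply: (proj1 M_diam); exists x, xs.
have e_le : vnorm (vsub (mulmv A x) (mulmv A xs)) <= M_A.
  by apply: (proj1 MA_diam); exists (mulmv A x), (mulmv A xs); split; [|split]; try exact: AD.
have gap_ge0 : 0 <= f x - f xs by have := xs_min x Dx; lra.
have gap_q : Rabs (f x - f xs - (dot b x - dot b xs))
    <= G * vnorm (vsub (mulmv A x) (mulmv A xs)).
  have -> : f x - f xs - (dot b x - dot b xs) = g (mulmv A x) - g (mulmv A xs) by rewrite /f; ring.
  exact: strongly_convex_Rabs_sub_le (Rlt_le _ _ mu_gt0) g_sc (AD _ Dx) (AD _ Dxs)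
    (gradg_ok _ (AD_U _ Dx)) (gradg_ok _ (AD_U _ Dxs)) (gradg_le _ Dx) (gradg_le _ Dxs).
have Xstar_P y : Xstar y <-> P_ts A b B c (mulmv A xs) (dot b xs) y.
  exact: (composite_argmin_iff (b := b) g_sc mu_gt0 (@polyhedron_convex _ _ B c) y Dxs xs_min).
have r_le := hoffman _ _ (ex_intro _ xs (proj1 (Xstar_P xs) (conj Dxs xs_min))) x Dx r
  (is_dist_ext Xstar_P r_dist).
have := quadratic_growth_arith mu_gt0 theta_gt0 G_ge0 (conj (vnorm_ge0 _) e_le) gap_ge0 q_le
  gap_q (dist_ge0 r_dist) r_le.
have := composite_gradient_ineq g_sc Dx Dxs (gradf_ok x Dx).
rewrite /mutilde /f; lra.
Qed.
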